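(* Let $I\subset S$ be a proper nonzero monomial complete intersection ideal, i.e. its minimal monomial generators form a regular sequence. Then $I$ is $0$-clean.
   Context: $S=K[x_1,\dots,x_n]$, $K$ a field. For a monomial $u=x_1^{a_1}\cdots x_n^{a_n}$, $\mathrm{supp}(u)=\{i:a_i>0\}$. For an ideal $I$, $\min(I)$ is the set of minimal primes of $I$. A monomial $u\neq 1$ with $u\notin I$ is a cleaner monomial of $I$ if $\min(I+Su)\subseteq\min(I)$. For $k\ge 0$, the class of $k$-clean monomial ideals is defined recursively (smallest class closed under the rule): a proper monomial ideal $I$ is $k$-clean if either $I$ is prime, or $I$ has no embedded primes and there is a cleaner monomial $u$ of $I$ with $|\mathrm{supp}(u)|\le k+1$ such that $I:u$ and $I+Su$ are $k$-clean. *)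

From HB Require Import structures.
From mathcomp Require Import all_boot all_order all_algebra.
Set Implicit Arguments. Unset Strict Implicit. Unset Printing Implicit Defensive.
Import GRing.Theory.
Local Open Scope ring_scope.

Section Ideals.
Variable R : comNzRingType.

Definition is_ideal (I : R -> Prop) : Prop :=
  [/\ I 0, (forall x y, I x -> I y -> I (x + y)) & (forall r x, I x -> I (r * x))].

Definition ideal_gen (A : R -> Prop) : R -> Prop :=
  fun x => forall J, is_ideal J -> (forall a, A a -> J a) -> J x.

Definition proper_id (I : R -> Prop) : Prop := ~ I 1.

Definition add_elt (I : R -> Prop) (u : R) : R -> Prop :=
  ideal_gen (fun x => I x \/ x = u).

Definition colon (I : R -> Prop) (u : R) : R -> Prop := fun x => I (x * u).

Definition is_prime (P : R -> Prop) : Prop :=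
  [/\ is_ideal P, proper_id P & forall a b, P (a * b) -> P a \/ P b].

Definition subset_pred (I J : R -> Prop) : Prop := forall x, I x -> J x.

Definition min_prime (I P : R -> Prop) : Prop :=
  [/\ is_prime P, subset_pred I P &
      forall Q, is_prime Q -> subset_pred I Q -> subset_pred Q P -> subset_pred P Q].

Definition ass_prime (I P : R -> Prop) : Prop :=
  is_prime P /\ exists f : R, forall x, P x <-> I (x * f).

Definition no_embedded_primes (I : R -> Prop) : Prop :=
  forall P, ass_prime I P -> min_prime I P.

Definition regular_seq (fs : seq R) : Prop :=
  proper_id (ideal_gen (fun x => x \in fs)) /\
  forall i, (i < size fs)%N -> forall x,
    ideal_gen (fun y => y \in take i fs) (nth 0 fs i * x) ->
    ideal_gen (fun y => y \in take i fs) x.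
End Ideals.

(* Realised as the iterated univariate polynomial ring K[x_0][x_1]...[x_(n-1)]. *)
Fixpoint mpoly (K : fieldType) (n : nat) : comNzRingType :=
  match n with
  | 0 => K
  | m.+1 => ({poly mpoly K m} : comNzRingType)
  end.

(* the variable x_i in K[x_0,...,x_(m-1)] (0 if i >= m, never used) *)
Fixpoint var (K : fieldType) (m : nat) (i : nat) : mpoly K m :=
  match m return mpoly K m with
  | 0 => 0
  | m'.+1 => if i == m' then ('X : {poly mpoly K m'}) else (var K m' i)%:P
  end.

Definition expo (n : nat) := {ffun 'I_n -> nat}.

Definition mono (K : fieldType) (n : nat) (a : expo n) : mpoly K n :=
  \prod_(i < n) var K n i ^+ a i.

Definition supp (n : nat) (a : expo n) : {set 'I_n} := [set i | (0 < a i)%N].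

(* componentwise order = divisibility of monomials *)
Definition expo_le (n : nat) (a b : expo n) : bool := [forall i, (a i <= b i)%N].

Definition monomial_ideal (K : fieldType) (n : nat) (I : mpoly K n -> Prop) : Prop :=
  exists A : expo n -> Prop,
    forall x, I x <-> ideal_gen (fun y => exists2 a, A a & y = mono K a) x.

Definition cleaner (K : fieldType) (n : nat) (I : mpoly K n -> Prop) (a : expo n) : Prop :=
  [/\ mono K a <> 1, ~ I (mono K a) &
      forall P, min_prime (add_elt I (mono K a)) P -> min_prime I P].

Inductive kclean (K : fieldType) (n : nat) (k : nat) : (mpoly K n -> Prop) -> Prop :=
| kclean_prime (I : mpoly K n -> Prop) :
    monomial_ideal I -> proper_id I -> is_prime I -> @kclean K n k I
| kclean_step (I : mpoly K n -> Prop) (a : expo n) :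
    monomial_ideal I -> proper_id I -> no_embedded_primes I ->
    cleaner I a -> (#|supp a| <= k.+1)%N ->
    @kclean K n k (colon I (mono K a)) -> @kclean K n k (add_elt I (mono K a)) ->
    @kclean K n k I.

(* A monomial complete intersection is generated by monomials with pairwise
   disjoint supports.  For such generators g_1, ..., g_r the minimal primes are
   the ideals (x_k : k in p) for transversals p, i.e. sets of variables meeting
   each support in exactly one variable, and every associated prime has this
   form (induction on the total degree, splitting along a variable), so there
   are no embedded primes.  If some g = g_i is not a variable, pick x_k | g:
   then I : x_k and I + (x_k) are generated by the same family with g replaced
   by g / x_k, resp. x_k; both are again coprime families of smaller total
   degree, and every transversal of the second one is a transversal of the
   original family, so x_k is a cleaner monomial.  Induction on the total
   degree concludes, the base case being an ideal generated by variables,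
   which is prime. *)

From mathcomp Require Import all_boot all_order all_algebra.
From Stdlib Require Import FunctionalExtensionality PropExtensionality Classical.
From mathcomp Require Import zify.
Set Implicit Arguments. Unset Strict Implicit. Unset Printing Implicit Defensive.
Import GRing.Theory.
Local Open Scope ring_scope.

Lemma pred_ext (T : Type) (P Q : T -> Prop) : (forall x, P x <-> Q x) -> P = Q.
Proof.
by move=> PQ; apply: functional_extensionality => x; apply: propositional_extensionality.
Qed.

Lemma ex_last_nat (P : nat -> Prop) N : (forall i, (N <= i)%N -> ~ P i) ->
  (exists i, P i) -> exists i, P i /\ forall j, (i < j)%N -> ~ P j.
Proof.
elim: N => [|N IHN] PN [i Pi]; first by case: (PN i (leq0n i)).
have [PN'|nPN] := classic (P N); first by exists N; split=> // j; apply: PN.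
apply: IHN; last by exists i.
by move=> j; rewrite leq_eqVlt => /orP[/eqP <- //|]; apply: PN.
Qed.

Section Ideals.
Variable R : comNzRingType.
Implicit Types (A J P : R -> Prop) (x y : R).

Lemma ideal_gen_is_ideal A : is_ideal (ideal_gen A).
Proof.
split=> [J [] //|x y Ax Ay J idJ AJ|r x Ax J idJ AJ]; case: (idJ) => _ JD JM.
  by apply: JD; [apply: Ax|apply: Ay].
by apply: JM; apply: Ax.
Qed.

Lemma ideal_gen_sub A x : A x -> ideal_gen A x.
Proof. by move=> Ax J _; apply. Qed.

Lemma ideal_gen_min A J : is_ideal J -> (forall x, A x -> J x) ->
  forall x, ideal_gen A x -> J x.
Proof. by move=> idJ AJ x; apply. Qed.

Lemma idealN J x : is_ideal J -> J x -> J (- x).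
Proof. by case=> _ _ JM Jx; rewrite -mulN1r; apply: JM. Qed.

Lemma idealB J x y : is_ideal J -> J x -> J y -> J (x - y).
Proof. by move=> idJ Jx Jy; case: (idJ) => _ JD _; apply: JD => //; apply: idealN. Qed.

Lemma idealDl J x y : is_ideal J -> J x -> (J (x + y) <-> J y).
Proof.
move=> idJ Jx; case: (idJ) => _ JD _; split=> [Jxy|]; last exact: JD.
by rewrite -(addKr x y); apply: JD => //; apply: idealN.
Qed.

Lemma prime_colon P u : is_prime P -> ~ P u -> forall x, P (x * u) <-> P x.
Proof.
case=> [[_ _ PM] _ Pprime] Pu x; split=> [/Pprime[] //|Px].
by rewrite mulrC; apply: PM.
Qed.

Lemma prime_prod P (I : finType) (F : I -> R) :
  is_prime P -> P (\prod_(i : I) F i) -> exists i, P (F i).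
Proof.
case=> _ P1 PM; apply: (big_ind (fun x => P x -> exists i, P (F i))).
- by move/P1.
- by move=> x y Px Py /PM[/Px|/Py].
- by move=> i _ Pi; exists i.
Qed.

Lemma prime_expr P x m : is_prime P -> P (x ^+ m) -> (0 < m)%N /\ P x.
Proof.
case=> _ P1 PM; elim: m => [|m IHm]; first by rewrite expr0 => /P1.
by rewrite exprS => /PM[//|/IHm[]].
Qed.

Lemma coefM_mod_ideal J (f g : {poly R}) i j : is_ideal J ->
  (forall l, (i < l)%N -> J f`_l) -> (forall l, (j < l)%N -> J g`_l) ->
  J ((f * g)`_(i + j) - f`_i * g`_j).
Proof.
move=> idJ Jf Jg; case: (idJ) => J0 JD JM.
have lt_i : (i < (i + j).+1)%N by rewrite ltnS leq_addr.
rewrite coefM (bigD1 (Ordinal lt_i)) //= addKn addrAC subrr add0r.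
apply: (big_ind J) => // l l_neq_i.
case: (ltngtP l i) => [lt_li|lt_il|eq_li].
- by apply: JM; apply: Jg; have := ltn_ord l; lia.
- by rewrite mulrC; apply: JM; apply: Jf.
- by move: l_neq_i; rewrite (_ : l = Ordinal lt_i) ?eqxx //; apply: val_inj.
Qed.

Lemma ex_last_coef_notin J (f : {poly R}) : J 0 -> ~ (forall i, J f`_i) ->
  exists i, ~ J f`_i /\ forall l, (i < l)%N -> J f`_l.
Proof.
move=> J0 nJf; have [i [nJi Jl]] : exists i, ~ J f`_i /\ forall l, (i < l)%N -> ~ ~ J f`_l.
  apply: (@ex_last_nat _ (size f)); last exact: not_all_ex_not.
  by move=> i le_fi; rewrite nth_default.
by exists i; split=> // l /Jl/NNPP.
Qed.

End Ideals.

Section Exponents.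
Variable n : nat.
Implicit Types (a b c : expo n) (k : 'I_n).

Definition expo0 : expo n := [ffun => 0%N].
Definition expo_unit k : expo n := [ffun i => (i == k) : nat].
Definition expo_add a b : expo n := [ffun i => (a i + b i)%N].
Definition expo_dec a k : expo n := [ffun i => (a i - (i == k))%N].
Definition expo_nz a := exists k, (0 < a k)%N.
Definition expo_coprime a b := forall k, a k = 0%N \/ b k = 0%N.
Definition expo_deg a : nat := (\sum_(i < n) a i)%N.

Lemma expo_leP a b : reflect (forall i, a i <= b i)%N (expo_le a b).
Proof. exact: forallP. Qed.

Lemma expo_le_refl a : expo_le a a.
Proof. by apply/expo_leP. Qed.

Lemma expo_le_trans a b c : expo_le a b -> expo_le b c -> expo_le a c.
Proof.
by move=> /expo_leP ab /expo_leP bc; apply/expo_leP => i; apply: leq_trans (ab i) (bc i).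
Qed.

Lemma expo_le_unit k b : expo_le (expo_unit k) b = (0 < b k)%N.
Proof.
apply/expo_leP/idP => [/(_ k)|bk i]; first by rewrite ffunE eqxx.
by rewrite ffunE; case: eqP => [->|].
Qed.

Lemma expo_dec_le a k : expo_le (expo_dec a k) a.
Proof. by apply/expo_leP => i; rewrite ffunE leq_subr. Qed.

Lemma expo_dec_neq a k : (0 < a k)%N -> expo_dec a k <> a.
Proof. by move=> ak /ffunP/(_ k); rewrite ffunE eqxx /=; lia. Qed.

Lemma expo_coprime_pos a b k : expo_coprime a b -> (0 < a k)%N -> (0 < b k)%N -> False.
Proof. by move=> /(_ k) [->|->]. Qed.

Lemma expo_nz_unit k : expo_nz (expo_unit k).
Proof. by exists k; rewrite ffunE eqxx. Qed.

Lemma expo_nz_dec a k : (0 < a k)%N -> a <> expo_unit k -> expo_nz (expo_dec a k).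
Proof.
move=> ak a_nvar; apply: NNPP => nz_dec; apply/a_nvar/ffunP => i.
by move/not_ex_all_not/(_ i): nz_dec; rewrite !ffunE; case: eqP => [->|_] /=; lia.
Qed.

Lemma supp_expo_unit k : supp (expo_unit k) = [set k].
Proof. by apply/setP => i; rewrite !inE ffunE; case: eqP. Qed.

Lemma expo_deg_lt a b : expo_le a b -> a <> b -> (expo_deg a < expo_deg b)%N.
Proof.
move=> /expo_leP ab a_neq_b.
have [i abi] : exists i, a i <> b i.
  by apply: not_all_ex_not => eq_ab; apply/a_neq_b/ffunP.
have lt_abi : (a i < b i)%N by rewrite ltn_neqAle ab andbT; apply/eqP.
rewrite /expo_deg (bigD1 i) //= [X in (_ < X)%N](bigD1 i) //= -addSn.
by apply: leq_add => //; apply: leq_sum => j _; apply: ab.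
Qed.

End Exponents.

Lemma expo_nil (a : expo 0) : a = expo0 0.
Proof. by apply/ffunP => -[]. Qed.

(* [mpoly K n.+1] is [{poly mpoly K n}] in the last variable x_n, so an exponent
   of [expo n.+1] splits into its first [n] coordinates and its last one. *)
Section ExponentSnoc.
Variable n : nat.
Implicit Types (a : expo n.+1) (b : expo n).

Definition expo_init a : expo n := [ffun i => a (lift ord_max i)].
Definition expo_last a : nat := a ord_max.
Definition expo_snoc b (t : nat) : expo n.+1 :=
  [ffun j => if unlift ord_max j is Some j' then b j' else t].

Lemma expo_last_snoc b t : expo_last (expo_snoc b t) = t.
Proof. by rewrite /expo_last ffunE unlift_none. Qed.

Lemma expo_snocK a : expo_snoc (expo_init a) (expo_last a) = a.
Proof. by apply/ffunP => j; rewrite ffunE; case: unliftP => [j'|] -> //; rewrite ffunE. Qed.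

Lemma expo_le_snoc b b' t t' :
  expo_le (expo_snoc b t) (expo_snoc b' t') = expo_le b b' && (t <= t')%N.
Proof.
apply/expo_leP/andP => [le_bt|[/expo_leP le_b le_t] j].
  split; last by have := le_bt ord_max; rewrite !ffunE unlift_none.
  by apply/expo_leP => i; have := le_bt (lift ord_max i); rewrite !ffunE liftK.
by rewrite !ffunE; case: unliftP.
Qed.

Lemma expo_add_snoc b t a :
  expo_add (expo_snoc b t) a = expo_snoc (expo_add b (expo_init a)) (t + expo_last a).
Proof. by apply/ffunP => i; rewrite !ffunE; case: unliftP => [i'|] -> /=; rewrite ?ffunE. Qed.

End ExponentSnoc.

Section MonomialIdeals.
Variable K : fieldType.

Lemma mono_snoc n (a : expo n.+1) :
  mono K a = (mono K (expo_init a))%:P * 'X^(expo_last a) :> {poly mpoly K n}.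
Proof.
rewrite /mono big_ord_recr /= eqxx; congr (_ * _).
rewrite rmorph_prod; apply: eq_bigr => i _.
rewrite rmorphXn /= ffunE ifN ?neq_ltn ?ltn_ord //.
by rewrite (_ : widen_ord _ i = lift ord_max i) //; apply: val_inj; rewrite /= /bump leqNgt ltn_ord.
Qed.

Lemma mono_expo0 n : mono K (expo0 n) = 1.
Proof. by rewrite /mono big1 // => i _; rewrite ffunE expr0. Qed.

Lemma mono_unit n (k : 'I_n) : mono K (expo_unit k) = var K n k.
Proof.
rewrite /mono (bigD1 k) //= big1 ?mulr1 => [|i /negbTE ik]; first by rewrite ffunE eqxx expr1.
by rewrite ffunE ik expr0.
Qed.

Lemma mono_add n (a b : expo n) : mono K (expo_add a b) = mono K a * mono K b.
Proof. by rewrite /mono -big_split; apply: eq_bigr => i _; rewrite ffunE exprD. Qed.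

(* [mideal U f]: every monomial occurring in [f] has its exponent in [U]; for
   an upward-closed [U] this is the monomial ideal spanned by [U]. *)
Fixpoint mideal n : (expo n -> Prop) -> mpoly K n -> Prop :=
  match n return (expo n -> Prop) -> mpoly K n -> Prop with
  | 0 => fun U f => U (expo0 0) \/ f = 0
  | m.+1 => fun U f =>
      forall i, mideal (fun b => U (expo_snoc b i)) (f : {poly mpoly K m})`_i
  end.

Definition upward n (U : expo n -> Prop) := forall a b, expo_le a b -> U a -> U b.

Lemma upward_snoc n (U : expo n.+1 -> Prop) i : upward U -> upward (fun b => U (expo_snoc b i)).
Proof. by move=> upU a b ab; apply: upU; rewrite expo_le_snoc ab leqnn. Qed.

Lemma sub_mideal n (U V : expo n -> Prop) : (forall a, U a -> V a) ->
  forall f, mideal U f -> mideal V f.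
Proof.
elim: n U V => [|n IHn] U V UV f /=; first by case=> [/UV|]; [left|right].
by move=> Uf i; apply: IHn (Uf i) => b; apply: UV.
Qed.

Lemma mideal0 n (U : expo n -> Prop) : mideal U 0.
Proof. by elim: n U => [|n IHn] U /=; [right|move=> i; rewrite coef0]. Qed.

Lemma mideal_all n (f : mpoly K n) : mideal (fun _ => True) f.
Proof. by elim: n f => [|n IHn] f /=; [left|move=> i; apply: IHn]. Qed.

Lemma midealD n (U : expo n -> Prop) f g : mideal U f -> mideal U g -> mideal U (f + g).
Proof.
elim: n U f g => [|n IHn] U f g /=; last by move=> Uf Ug i; rewrite coefD; apply: IHn.
by case=> [Ua|->]; [left|case=> [Ua|->]; [left|right; rewrite addr0]].
Qed.

Lemma mideal_sum n (U : expo n -> Prop) (I : Type) (r : seq I) (P : pred I) F :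
  (forall i, P i -> mideal U (F i)) -> mideal U (\sum_(i <- r | P i) F i).
Proof. by move=> UF; apply: big_ind => //; [apply: mideal0|apply: midealD]. Qed.

Lemma midealMl n (U : expo n -> Prop) r f : upward U -> mideal U f -> mideal U (r * f).
Proof.
elim: n U r f => [|n IHn] U r f upU /=.
  by case=> [Ua|->]; [left|right; rewrite mulr0].
move=> Uf i; rewrite coefM; apply: mideal_sum => j _.
apply: (@sub_mideal _ (fun b => U (expo_snoc b (i - j)))).
  by move=> b; apply: upU; rewrite expo_le_snoc expo_le_refl leq_subr.
by apply: IHn; [apply: upward_snoc|apply: Uf].
Qed.

Lemma mideal_is_ideal n (U : expo n -> Prop) : upward U -> is_ideal (mideal U).
Proof. by move=> upU; split=> [|f g|r f]; [apply: mideal0|apply: midealD|apply: midealMl]. Qed.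

Lemma mideal_mono n (U : expo n -> Prop) a : mideal U (mono K a) <-> U a.
Proof.
elim: n U a => [|n IHn] U a /=.
  rewrite /mono big_ord0 (expo_nil a).
  by split=> [[//|/eqP]|]; [rewrite oner_eq0|left].
rewrite mono_snoc; split.
  move=> /(_ (expo_last a)); rewrite coefCM coefXn eqxx mulr1 => /IHn.
  by rewrite expo_snocK.
move=> Ua i; rewrite coefCM coefXn; case: eqP => [->|_].
  by rewrite mulr1; apply/IHn; rewrite expo_snocK.
by rewrite mulr0; apply: mideal0.
Qed.

Lemma mideal_colon n (U : expo n -> Prop) a f :
  mideal U (f * mono K a) <-> mideal (fun b => U (expo_add b a)) f.
Proof.
elim: n U a f => [|n IHn] U a f /=.
  by rewrite /mono big_ord0 mulr1 [expo_add _ a]expo_nil.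
rewrite mono_snoc mulrA; split=> [Ufa j|Uf i].
  have := Ufa (j + expo_last a)%N.
  rewrite coefMXn ltnNge leq_addl /= addnK coefMC => /IHn.
  by apply: sub_mideal => b; rewrite expo_add_snoc.
rewrite coefMXn; case: ltnP => [_|le_ai]; first exact: mideal0.
rewrite coefMC; apply/IHn; apply: sub_mideal (Uf (i - expo_last a)%N) => b.
by rewrite expo_add_snoc subnK.
Qed.

Definition monos n (A : expo n -> Prop) : mpoly K n -> Prop :=
  fun y => exists2 a, A a & y = mono K a.

Definition up_set n (A : expo n -> Prop) : expo n -> Prop :=
  fun b => exists2 a, A a & expo_le a b.

Lemma upward_up_set n (A : expo n -> Prop) : upward (up_set A).
Proof. by move=> a b ab [c Ac ca]; exists c => //; apply: expo_le_trans ab. Qed.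

Lemma mideal_up_set_gen n (A : expo n -> Prop) f :
  mideal (up_set A) f -> ideal_gen (monos A) f.
Proof.
elim: n A f => [|n IHn] A f /=; have [J0 JD JM] := ideal_gen_is_ideal (monos A).
  case=> [[a Aa _]|->] //; rewrite -[f]mulr1; apply: JM.
  by apply: ideal_gen_sub; exists a; rewrite // /mono big_ord0.
move=> Af; rewrite -[f]coefK poly_def; apply: big_ind => // i _.
rewrite -mul_polyC.
(* f_i is spanned by the x^(init a) with last a <= i, and x^(init a) X^i is a
   multiple of x^a. *)
pose Ai (c : expo n) := exists2 a, A a & expo_init a = c /\ (expo_last a <= i)%N.
have Ai_fi : ideal_gen (monos Ai) f`_i.
  apply: IHn; apply: sub_mideal (Af i) => b [a Aa].
  rewrite -(expo_snocK a) expo_le_snoc => /andP[ab ai].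
  by exists (expo_init a) => //; exists a; rewrite ?expo_last_snoc.
pose Ji (c : mpoly K n) := ideal_gen (monos A) (c%:P * 'X^i : mpoly K n.+1).
have idJi : is_ideal Ji.
  split=> [|x y Jx Jy|r x Jx]; rewrite /Ji ?mul0r //.
    by rewrite polyCD mulrDl; apply: JD.
  by rewrite polyCM -mulrA; apply: JM.
apply: (ideal_gen_min idJi) Ai_fi => y [c [a Aa [<- ai]] ->].
rewrite /Ji -(subnKC ai) exprD mulrA -mono_snoc mulrC.
by apply: JM; apply: ideal_gen_sub; exists a.
Qed.

Lemma ideal_gen_monos n (A : expo n -> Prop) : ideal_gen (monos A) = mideal (up_set A).
Proof.
apply: pred_ext => f; split; last exact: mideal_up_set_gen.
apply: ideal_gen_min; first exact/mideal_is_ideal/upward_up_set.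
by move=> y [a Aa ->]; apply/mideal_mono; exists a; rewrite ?expo_le_refl.
Qed.

End MonomialIdeals.

Section VariablePrimes.
Variable K : fieldType.

Definition meets n (p : pred 'I_n) : expo n -> Prop := fun b => exists2 k, p k & (0 < b k)%N.

Definition var_ideal n (p : pred 'I_n) : mpoly K n -> Prop :=
  @mideal K n (meets p).

Lemma upward_meets n (p : pred 'I_n) : upward (meets p).
Proof. by move=> a b /expo_leP ab [k pk ak]; exists k => //; apply: leq_trans (ab k). Qed.

Lemma meets_snoc n (p : pred 'I_n.+1) b i :
  meets p (expo_snoc b i) <->
  meets (fun k => p (lift ord_max k)) b \/ (p ord_max /\ (0 < i)%N).
Proof.
split=> [[k pk]|[[k pk bk]|[pmax i_gt0]]].
- by rewrite ffunE; case: unliftP => [k'|] ek; rewrite ek in pk => ?; [left; exists k'|right].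
- by exists (lift ord_max k); rewrite // ffunE liftK.
- by exists ord_max; rewrite // ffunE unlift_none.
Qed.

Lemma var_ideal_snoc n (p : pred 'I_n.+1) (f : {poly mpoly K n}) :
  let p' := fun k => p (lift ord_max k) in
  var_ideal p f <->
  if p ord_max then var_ideal p' f`_0 else forall i, var_ideal p' f`_i.
Proof.
move=> p'; rewrite /var_ideal /=.
have meets_p' i : (i = 0%N \/ ~~ p ord_max) -> (fun b => meets p (expo_snoc b i)) = meets p'.
  move=> i0; apply: pred_ext => b; rewrite meets_snoc; split=> [[//|[pmax i_gt0]]|]; last by left.
  by case: i0 => [i0|/negP//]; rewrite i0 in i_gt0.
case: ifP => pmax; last first.
  have {}meets_p' i := meets_p' i (or_intror (negbT pmax)).
  by split=> fp i; [rewrite -(meets_p' i)|rewrite meets_p'].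
split=> [/(_ 0%N)|fp0 [|i]]; try by rewrite meets_p'; [|left].
by apply: sub_mideal (mideal_all _) => b _; apply/meets_snoc; right.
Qed.

Lemma not_var_idealM n (p : pred 'I_n) f g :
  ~ var_ideal p f -> ~ var_ideal p g -> ~ var_ideal p (f * g).
Proof.
elim: n p f g => [|n IHn] p f g.
  have nmeets0 : ~ meets p (expo0 0) by case=> -[].
  by rewrite /var_ideal /= => nf ng [//|/eqP]; rewrite mulf_eq0 => /orP[]/eqP; auto.
rewrite !var_ideal_snoc; set p' := fun k => _; case: (p ord_max).
  by rewrite coef0M; apply: IHn.
(* Gauss' argument: the coefficient of f * g in the sum of the top degrees of f
   and g outside the ideal is, modulo the ideal, the product of those two. *)
have J0 := mideal0 K (meets p'); have idJ := mideal_is_ideal K (upward_meets (p := p')).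
move=> /(ex_last_coef_notin J0) [i [nfi fl]] /(ex_last_coef_notin J0) [j [ngj gl]] fg.
apply: IHn nfi ngj _; rewrite -[_ * _](subKr ((f * g)`_(i + j))).
by apply: idealB => //; apply: coefM_mod_ideal.
Qed.

Lemma var_ideal_prime n (p : pred 'I_n) : is_prime (var_ideal p).
Proof.
split; first exact/mideal_is_ideal/upward_meets.
  by rewrite /proper_id -(mono_expo0 K n) => /mideal_mono[k _]; rewrite ffunE.
move=> f g fg; have [|nf] := classic (var_ideal p f); first by left.
have [|ng] := classic (var_ideal p g); first by right.
by case: (not_var_idealM nf ng).
Qed.

Lemma var_ideal_var n (p : pred 'I_n) (k : 'I_n) : var_ideal p (var K n k) <-> p k.
Proof.
rewrite -mono_unit /var_ideal mideal_mono.
split=> [[j pj]|pk]; last by exists k; rewrite // ffunE eqxx.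
by rewrite ffunE; case: eqP => [<-|].
Qed.

Lemma var_ideal_min n (p : pred 'I_n) (J : mpoly K n -> Prop) : is_ideal J ->
  (forall k, p k -> J (var K n k)) -> subset_pred (var_ideal p) J.
Proof.
move=> idJ pJ f.
have -> : var_ideal p = ideal_gen (monos (fun a => exists2 k, p k & a = expo_unit k)).
  rewrite ideal_gen_monos /var_ideal; congr mideal; apply: pred_ext => b; split.
    by move=> [k pk bk]; exists (expo_unit k); [exists k|rewrite expo_le_unit].
  by move=> [a [k pk ->]]; rewrite expo_le_unit; exists k.
by apply: ideal_gen_min => // _ [_ [k pk ->] ->]; rewrite mono_unit; apply: pJ.
Qed.

End VariablePrimes.

Section CoprimeFamilies.
Variables (K : fieldType) (n : nat).
Implicit Types (L : seq (expo n)) (a b g h : expo n) (p : pred 'I_n).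

Definition coprime_family L :=
  (forall h, h \in L -> expo_nz h) /\
  (forall h h', h \in L -> h' \in L -> h <> h' -> expo_coprime h h').

Definition mon_ideal L : mpoly K n -> Prop := mideal (up_set (fun a => a \in L)).

Definition transversal L p :=
  [/\ forall h, h \in L -> exists2 k, p k & (0 < h k)%N,
      forall h, h \in L -> forall k j, p k -> p j -> (0 < h k)%N -> (0 < h j)%N -> k = j
    & forall k, p k -> exists2 h, h \in L & (0 < h k)%N].

Lemma coprime_family_cons g L : coprime_family (g :: L) -> coprime_family L.
Proof.
case=> nzL copL; split=> [h hL|h h' hL h'L]; first by apply: nzL; rewrite inE hL orbT.
by apply: copL; rewrite inE ?hL ?h'L orbT.
Qed.

Lemma mon_ideal_gen L : mon_ideal L = ideal_gen (monos (fun a => a \in L)).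
Proof. by rewrite ideal_gen_monos. Qed.

Lemma mon_ideal_gen_map L :
  mon_ideal L = ideal_gen (fun y => y \in [seq mono K a | a <- L]).
Proof.
rewrite mon_ideal_gen; congr ideal_gen; apply: pred_ext => y.
by split=> [[a aL ->]|/mapP[a aL ->]]; [apply: map_f|exists a].
Qed.

Lemma mon_ideal_is_ideal L : is_ideal (mon_ideal L).
Proof. exact/mideal_is_ideal/upward_up_set. Qed.

Lemma mon_ideal_monomial L : monomial_ideal (mon_ideal L).
Proof. by exists (fun a => a \in L) => f; rewrite mon_ideal_gen. Qed.

Lemma mon_ideal_mono L h : h \in L -> mon_ideal L (mono K h).
Proof. by move=> hL; apply/mideal_mono; exists h; rewrite ?expo_le_refl. Qed.

Lemma sub_mon_ideal L L' : {subset L <= L'} -> subset_pred (mon_ideal L) (mon_ideal L').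
Proof. by move=> LL'; apply: sub_mideal => b [h /LL' hL' hb]; exists h. Qed.

Lemma mon_ideal_proper L : coprime_family L -> proper_id (mon_ideal L).
Proof.
case=> nzL _; rewrite /proper_id -(mono_expo0 K n) => /mideal_mono[h hL /expo_leP hle].
by have [k hk] := nzL h hL; have := hle k; rewrite ffunE; lia.
Qed.

Lemma mon_ideal_cons L a f : mon_ideal (a :: L) f ->
  exists r c, mon_ideal L r /\ f = r + mono K a * c.
Proof.
rewrite mon_ideal_gen; move: f.
apply: (ideal_gen_min (J := fun f => exists r c, mon_ideal L r /\ f = r + mono K a * c)).
  have [J0 JD JM] := mon_ideal_is_ideal L; split.
  - by exists 0, 0; rewrite mulr0 addr0.
  - move=> _ _ [r1 [c1 [Jr1 ->]]] [r2 [c2 [Jr2 ->]]].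
    by exists (r1 + r2), (c1 + c2); rewrite mulrDr addrACA; split=> //; apply: JD.
  - move=> s _ [r [c [Jr ->]]].
    by exists (s * r), (s * c); rewrite mulrDr mulrCA; split=> //; apply: JM.
move=> y [h]; rewrite inE => /orP[/eqP ->|hL] ->.
  by exists 0, 1; rewrite mulr1 add0r; split=> //; case: (mon_ideal_is_ideal L).
by exists (mono K h), 0; rewrite mulr0 addr0; split=> //; apply: mon_ideal_mono.
Qed.

Lemma add_elt_mon_ideal L a : add_elt (mon_ideal L) (mono K a) = mon_ideal (a :: L).
Proof.
rewrite !mon_ideal_gen /add_elt; apply: pred_ext => f; split.
  apply: ideal_gen_min => [|y [Ly|->]]; first exact: ideal_gen_is_ideal.
    move: y Ly; apply: ideal_gen_min; first exact: ideal_gen_is_ideal.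
    by move=> y [h hL ->]; apply: ideal_gen_sub; exists h; rewrite // inE hL orbT.
  by apply: ideal_gen_sub; exists a; rewrite ?mem_head.
apply: ideal_gen_min => [|y [h]]; first exact: ideal_gen_is_ideal.
rewrite inE => /orP[/eqP ->|hL] ->; first by apply: ideal_gen_sub; right.
by apply: ideal_gen_sub; left; apply: ideal_gen_sub; exists h.
Qed.

Lemma colon_mon_ideal L a :
  colon (mon_ideal L) (mono K a) = mideal (fun b => up_set (fun h => h \in L) (expo_add b a)).
Proof. by apply: pred_ext => f; apply: mideal_colon. Qed.

Lemma prime_mono (P : mpoly K n -> Prop) a :
  is_prime P -> P (mono K a) -> exists k, (0 < a k)%N /\ P (var K n k).
Proof. by move=> primeP /(prime_prod primeP) [k /(prime_expr primeP)]; exists k. Qed.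

Lemma transversal_min_prime L p : transversal L p -> min_prime (mon_ideal L) (var_ideal p).
Proof.
case=> meetL uniqL hitL; split; first exact: var_ideal_prime.
  apply: sub_mideal => b [h /meetL[k pk hk] /expo_leP hb].
  by exists k => //; apply: leq_trans (hb k).
move=> Q primeQ LQ Qp; apply: var_ideal_min; first by case: primeQ.
move=> k pk; have [h hL hk] := hitL k pk.
have [j [hj Qj]] := prime_mono primeQ (LQ _ (mon_ideal_mono hL)).
have /var_ideal_var pj := Qp _ Qj.
by rewrite (uniqL h hL k j pk pj hk).
Qed.

Lemma exists_transversal L (P : mpoly K n -> Prop) : coprime_family L ->
  (forall h, h \in L -> exists k, (0 < h k)%N /\ P (var K n k)) ->
  exists p, transversal L p /\ forall k, p k -> P (var K n k).
Proof.
elim: L => [|g L IHL] copL PL; first by exists pred0; split.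
have [p [[meetL uniqL hitL] pP]] : exists p, transversal L p /\ forall k, p k -> P (var K n k).
  by apply: IHL => [|h hL]; [apply: coprime_family_cons copL|apply: PL; rewrite inE hL orbT].
have [gL|gNL] := boolP (g \in L).
  exists p; split=> //; split=> [h|h|k /hitL[h hL hk]]; last by exists h; rewrite // inE hL orbT.
    by rewrite inE => /orP[/eqP ->|]; apply: meetL.
  by rewrite inE => /orP[/eqP ->|]; apply: uniqL.
have gL_coprime h j : h \in L -> (0 < g j)%N -> (0 < h j)%N -> False.
  move=> hL; apply: expo_coprime_pos; case: copL => _; apply; rewrite ?inE ?hL ?eqxx ?orbT //.
  by move=> eq_gh; rewrite eq_gh hL in gNL.
have [k [gk Pk]] := PL g (mem_head _ _).
exists (fun j => (j == k) || p j); split=> [|j /orP[/eqP ->|/pP] //].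
split=> [h|h|j].
- rewrite inE => /orP[/eqP ->|hL]; first by exists k; rewrite ?eqxx.
  by have [j pj hj] := meetL h hL; exists j; rewrite ?pj ?orbT.
- rewrite inE => /orP[/eqP ->|hL] j1 j2.
    have gk_only j : (j == k) || p j -> (0 < g j)%N -> j = k.
      by move=> /orP[/eqP //|/hitL[h' h'L h'j] gj]; case: (gL_coprime h' j h'L gj h'j).
    by move=> pj1 pj2 gj1 gj2; rewrite (gk_only _ pj1 gj1) (gk_only _ pj2 gj2).
  have h_in_p j : (j == k) || p j -> (0 < h j)%N -> p j.
    by move=> /orP[/eqP ->|//] hk; case: (gL_coprime h k hL gk hk).
  by move=> pj1 pj2 hj1 hj2; exact: uniqL h hL _ _ (h_in_p _ pj1 hj1) (h_in_p _ pj2 hj2) hj1 hj2.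
- move=> /orP[/eqP ->|/hitL[h hL hj]]; first by exists g; rewrite ?mem_head.
  by exists h; rewrite ?inE ?hL ?orbT.
Qed.

Lemma min_prime_transversal L P : coprime_family L -> min_prime (mon_ideal L) P ->
  exists p, transversal L p /\ P = var_ideal p.
Proof.
move=> copL [primeP LP minP].
have [p [trp pP]] : exists p, transversal L p /\ forall k, p k -> P (var K n k).
  by apply: exists_transversal => // h hL; apply: prime_mono primeP (LP _ (mon_ideal_mono hL)).
have pP' : subset_pred (var_ideal p) P by apply: var_ideal_min => //; case: primeP.
have [primep Lp _] := transversal_min_prime trp.
by exists p; split=> //; apply: pred_ext => f; split=> [/minP|/pP']; apply.
Qed.

End CoprimeFamilies.

Definition without n (L : seq (expo n)) (g : expo n) := [seq h <- L | h != g].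

Definition total_deg n (L : seq (expo n)) := (\sum_(h <- L) expo_deg h)%N.

Lemma total_deg_replace n (L : seq (expo n)) (g x : expo n) : g \in L -> expo_le x g -> x <> g ->
  (total_deg (x :: without L g) < total_deg L)%N.
Proof.
move=> gL xg x_neq_g; rewrite /total_deg big_cons /without big_filter.
rewrite [X in (_ < X)%N](bigID (pred1 g)) /= addnC [X in (_ < X)%N]addnC ltn_add2l.
rewrite (big_rem g) //= eqxx.
exact: leq_trans (expo_deg_lt xg x_neq_g) (leq_addr _ _).
Qed.

Section Reduction.
Variables (K : fieldType) (n : nat) (L : seq (expo n)) (g : expo n).
Hypotheses (copL : coprime_family L) (gL : g \in L).

Lemma mem_without h : h \in without L g = (h != g) && (h \in L).
Proof. exact: mem_filter. Qed.

Lemma coprime_generator h : h \in L -> h != g -> expo_coprime g h.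
Proof. by move=> hL /eqP h_neq_g; case: copL => _; apply=> // /esym. Qed.

Lemma coprime_family_replace x : expo_le x g -> expo_nz x -> coprime_family (x :: without L g).
Proof.
move=> /expo_leP xg nzx; have [nzL copL'] := copL.
have x_coprime h : h \in without L g -> expo_coprime x h.
  rewrite mem_without => /andP[h_neq_g hL] i.
  by have := coprime_generator hL h_neq_g i; have := xg i; lia.
split=> [h|h h']; first by rewrite inE => /orP[/eqP ->|]; rewrite // mem_without => /andP[_ /nzL].
rewrite !inE => /orP[/eqP ->|hL] /orP[/eqP ->|h'L] h_neq_h' //; first exact: x_coprime.
  by move=> i; case: (x_coprime h hL i); [right|left].
by move: hL h'L; rewrite !mem_without => /andP[_ hL] /andP[_ h'L]; apply: copL'.
Qed.

Variable k : 'I_n.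
Hypothesis gk : (0 < g k)%N.

Lemma coprime_family_replace_var : coprime_family (expo_unit k :: without L g).
Proof. by apply: coprime_family_replace; [rewrite expo_le_unit|apply: expo_nz_unit]. Qed.

Lemma coprime_family_replace_dec :
  g <> expo_unit k -> coprime_family (expo_dec g k :: without L g).
Proof.
by move=> g_nvar; apply: coprime_family_replace; [apply: expo_dec_le|apply: expo_nz_dec].
Qed.

Lemma total_deg_replace_var :
  g <> expo_unit k -> (total_deg (expo_unit k :: without L g) < total_deg L)%N.
Proof. by move=> g_nvar; apply: total_deg_replace => //; [rewrite expo_le_unit|apply: nesym]. Qed.

Lemma total_deg_replace_dec : (total_deg (expo_dec g k :: without L g) < total_deg L)%N.
Proof. by apply: total_deg_replace => //; [apply: expo_dec_le|apply: expo_dec_neq]. Qed.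

Lemma up_set_colon_var b :
  up_set (fun h => h \in L) (expo_add b (expo_unit k)) <->
  up_set (fun h => h \in expo_dec g k :: without L g) b.
Proof.
split=> [[h hL /expo_leP hb]|[h]].
  have [eq_hg|h_neq_g] := eqVneq h g.
    exists (expo_dec g k); first exact: mem_head.
    by apply/expo_leP => i; have := hb i; rewrite eq_hg !ffunE; case: (i == k) => /=; lia.
  exists h; first by rewrite inE mem_without h_neq_g hL orbT.
  apply/expo_leP => i; have := hb i; have := coprime_generator hL h_neq_g i; rewrite !ffunE.
  by have := gk; case: eqP => [->|_] /=; lia.
rewrite inE mem_without => /orP[/eqP ->|/andP[_ hL]] /expo_leP hb.
  by exists g => //; apply/expo_leP => i; have := hb i; rewrite !ffunE; case: eqP => [->|_] /=; lia.
by exists h => //; apply/expo_leP => i; have := hb i; rewrite !ffunE; lia.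
Qed.

Lemma up_set_colon_dec b :
  up_set (fun h => h \in L) (expo_add b (expo_dec g k)) <->
  up_set (fun h => h \in expo_unit k :: without L g) b.
Proof.
split=> [[h hL /expo_leP hb]|[h]].
  have [eq_hg|h_neq_g] := eqVneq h g.
    exists (expo_unit k); first exact: mem_head.
    by apply/expo_leP => i; have := hb i; rewrite eq_hg !ffunE; case: eqP => [->|_] /=; lia.
  exists h; first by rewrite inE mem_without h_neq_g hL orbT.
  apply/expo_leP => i; have := hb i; have := coprime_generator hL h_neq_g i; rewrite !ffunE.
  by case=> ->; lia.
rewrite inE mem_without => /orP[/eqP ->|/andP[_ hL]] /expo_leP hb.
  by exists g => //; apply/expo_leP => i; have := hb i; rewrite !ffunE; case: eqP => [->|_] /=; lia.
by exists h => //; apply/expo_leP => i; have := hb i; rewrite !ffunE; lia.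
Qed.

Lemma up_set_add_var b :
  up_set (fun h => h \in expo_unit k :: L) b <->
  up_set (fun h => h \in expo_unit k :: without L g) b.
Proof.
have ukg : expo_le (expo_unit k) g by rewrite expo_le_unit.
split=> [[h]|[h]]; rewrite !inE ?mem_without.
  case/orP=> [/eqP ->|hL] hb; first by exists (expo_unit k); rewrite ?mem_head.
  have [eq_hg|h_neq_g] := eqVneq h g.
    by exists (expo_unit k); rewrite ?mem_head //; apply: expo_le_trans hb; rewrite eq_hg.
  by exists h; rewrite // inE mem_without h_neq_g hL orbT.
case/orP=> [/eqP ->|/andP[_ hL]] hb; first by exists (expo_unit k); rewrite ?mem_head.
by exists h; rewrite // inE hL orbT.
Qed.

Lemma colon_var_mon_ideal :
  colon (mon_ideal L) (mono K (expo_unit k)) = mon_ideal (expo_dec g k :: without L g).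
Proof.
by rewrite colon_mon_ideal /mon_ideal; congr mideal; apply: pred_ext; apply: up_set_colon_var.
Qed.

Lemma colon_dec_mon_ideal :
  colon (mon_ideal L) (mono K (expo_dec g k)) = mon_ideal (expo_unit k :: without L g).
Proof.
by rewrite colon_mon_ideal /mon_ideal; congr mideal; apply: pred_ext; apply: up_set_colon_dec.
Qed.

Lemma add_var_mon_ideal :
  add_elt (mon_ideal L) (mono K (expo_unit k)) = mon_ideal (expo_unit k :: without L g).
Proof.
by rewrite add_elt_mon_ideal /mon_ideal; congr mideal; apply: pred_ext; apply: up_set_add_var.
Qed.

Lemma transversal_replace_var p :
  transversal (expo_unit k :: without L g) p -> transversal L p.
Proof.
case=> meetL uniqL hitL.
have g_only_k j : p j -> (0 < g j)%N -> j = k.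
  move=> /hitL[h]; rewrite inE mem_without => /orP[/eqP ->|/andP[h_neq_g hL]].
    by rewrite ffunE; case: eqP.
  by move=> hj gj; case: (expo_coprime_pos (coprime_generator hL h_neq_g) gj hj).
split=> [h hL|h hL|j /hitL[h]].
- have [->|h_neq_g] := eqVneq h g; last by apply: meetL; rewrite inE mem_without h_neq_g hL orbT.
  have [j pj] := meetL _ (mem_head _ _); rewrite ffunE.
  by case: eqP => [jk _|//]; exists j; rewrite // jk.
- have [->|h_neq_g] := eqVneq h g; last by apply: uniqL; rewrite inE mem_without h_neq_g hL orbT.
  by move=> j1 j2 pj1 pj2 gj1 gj2; rewrite (g_only_k _ pj1 gj1) (g_only_k _ pj2 gj2).
- rewrite inE mem_without => /orP[/eqP ->|/andP[_ hL] hj]; last by exists h.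
  by rewrite ffunE; case: eqP => // -> _; exists g.
Qed.

Lemma transversal_replace_dec p :
  transversal (expo_dec g k :: without L g) p -> ~ p k -> transversal L p.
Proof.
case=> meetL uniqL hitL npk.
have dec_pos j : (0 < expo_dec g k j)%N -> (0 < g j)%N by rewrite ffunE; lia.
have pos_dec j : p j -> (0 < g j)%N -> (0 < expo_dec g k j)%N.
  by rewrite ffunE; case: eqP => [->|_] //; rewrite subn0.
split=> [h hL|h hL|j /hitL[h]].
- have [->|h_neq_g] := eqVneq h g; last by apply: meetL; rewrite inE mem_without h_neq_g hL orbT.
  by have [j pj /dec_pos] := meetL _ (mem_head _ _); exists j.
- have [->|h_neq_g] := eqVneq h g; last by apply: uniqL; rewrite inE mem_without h_neq_g hL orbT.
  move=> j1 j2 pj1 pj2 gj1 gj2.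
  exact: uniqL (mem_head _ _) _ _ pj1 pj2 (pos_dec _ pj1 gj1) (pos_dec _ pj2 gj2).
- rewrite inE mem_without => /orP[/eqP -> /dec_pos|/andP[_ hL] hj]; last by exists h.
  by exists g.
Qed.

Lemma ass_prime_replace_var (P : mpoly K n -> Prop) :
  ass_prime (mon_ideal L) P -> P (var K n k) ->
  ass_prime (mon_ideal (expo_unit k :: without L g)) P.
Proof.
move=> [primeP [f Pf]] Pk; split=> //.
have : colon (mon_ideal L) (mono K (expo_unit k)) f by rewrite /colon mulrC mono_unit -Pf.
rewrite colon_var_mon_ideal => /mon_ideal_cons[r [c [r_without ef]]].
have rL : mon_ideal L r by apply: sub_mon_ideal r_without => h; rewrite mem_without => /andP[].
exists c => x; rewrite Pf ef mulrDr idealDl; last by case: (mon_ideal_is_ideal K L) => _ _; apply.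
  by rewrite -colon_dec_mon_ideal /colon mulrCA mulrC.
exact: mon_ideal_is_ideal.
Qed.

Lemma ass_prime_replace_dec (P : mpoly K n -> Prop) :
  ass_prime (mon_ideal L) P -> ~ P (var K n k) ->
  ass_prime (mon_ideal (expo_dec g k :: without L g)) P.
Proof.
move=> [primeP [f Pf]] nPk; split=> //; exists f => x.
by rewrite -(prime_colon primeP nPk) Pf -colon_var_mon_ideal /colon mono_unit mulrAC.
Qed.

Lemma cleaner_var : g <> expo_unit k -> cleaner (@mon_ideal K n L) (expo_unit k).
Proof.
move=> g_nvar; split.
- rewrite mono_unit => k1; have [_ nI1 _] := var_ideal_prime K (pred1 k).
  by apply: nI1; rewrite -k1; apply/var_ideal_var => /=.
- move=> /mideal_mono[h hL /expo_leP hk].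
  have [j hj] := copL.1 h hL.
  have ejk : j = k by have := hk j; rewrite ffunE; case: eqP => //= _; lia.
  rewrite {}ejk in hj; have [eq_hg|h_neq_g] := eqVneq h g.
    by apply/g_nvar/ffunP => i; have := hk i; rewrite -eq_hg !ffunE; case: eqP => [->|_] /=; lia.
  exact: expo_coprime_pos (coprime_generator hL h_neq_g) gk hj.
- move=> P; rewrite add_var_mon_ideal.
  move=> /(min_prime_transversal coprime_family_replace_var)[p [trp ->]].
  exact/transversal_min_prime/transversal_replace_var.
Qed.

End Reduction.

Section CleanCoprimeFamilies.
Variables (K : fieldType) (n : nat).
Implicit Types (L : seq (expo n)) (P : mpoly K n -> Prop).

Lemma nonvar_generatorP L :
  (exists (g : expo n) (k : 'I_n), [/\ g \in L, (0 < g k)%N & g <> expo_unit k]) \/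
  (forall g, g \in L -> forall k, (0 < g k)%N -> g = expo_unit k).
Proof.
set nvar := exists (g : expo n) (k : 'I_n), _.
have [|no_nvar] := classic nvar; first by left.
by right=> g gL k gk; apply: NNPP => g_nvar; apply: no_nvar; exists g, k.
Qed.

Lemma var_generators_prime L : coprime_family L ->
  (forall g, g \in L -> forall k, (0 < g k)%N -> g = expo_unit k) ->
  exists p, transversal L p /\ mon_ideal L = var_ideal p :> (mpoly K n -> Prop).
Proof.
case=> nzL _ varL; exists (fun k => has (fun h : expo n => (0 < h k)%N) L); split; last first.
  congr mideal; apply: pred_ext => b; split=> [[h hL hb]|[k /hasP[h hL hk] bk]].
    have [k hk] := nzL h hL; exists k; first by apply/hasP; exists h.
    by move: hb; rewrite (varL h hL k hk) expo_le_unit.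
  by exists h; rewrite // (varL h hL k hk) expo_le_unit.
split=> [h hL|h hL k j _ _ hk|k /hasP[h hL hk]]; last by exists h.
  by have [k hk] := nzL h hL; exists k => //; apply/hasP; exists h.
by rewrite (varL h hL k hk) ffunE; case: eqP.
Qed.

Lemma ass_prime_transversal L P : coprime_family L -> ass_prime (mon_ideal L) P ->
  exists p, transversal L p /\ P = var_ideal p.
Proof.
move: (ltnSn (total_deg L)); move: {2}(total_deg L).+1 => N.
elim: N L P => [//|N IHN] L P degL copL assP.
have [[g [k [gL gk g_nvar]]]|varL] := nonvar_generatorP L; last first.
  have [p [trp eLp]] := var_generators_prime copL varL; exists p; split=> //.
  case: assP => primeP [f Pf]; rewrite eLp in Pf.
  have nf : ~ var_ideal p f by rewrite -[f]mul1r -Pf; case: primeP.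
  by apply: pred_ext => x; rewrite Pf prime_colon //; apply: var_ideal_prime.
have [Pk|nPk] := classic (P (var K n k)).
  have [p [trp ->]] := IHN _ P (leq_trans (total_deg_replace_var gL gk g_nvar) (ltnSE degL))
    (coprime_family_replace_var copL gL gk) (ass_prime_replace_var copL gL gk assP Pk).
  by exists p; split=> //; apply: transversal_replace_var trp.
have [p [trp eP]] := IHN _ P (leq_trans (total_deg_replace_dec gL gk) (ltnSE degL))
  (coprime_family_replace_dec copL gL gk g_nvar) (ass_prime_replace_dec copL gL gk assP nPk).
exists p; split=> //; apply: transversal_replace_dec trp _ => // pk.
by apply: nPk; rewrite eP; apply/var_ideal_var.
Qed.

Lemma coprime_family_kclean L : coprime_family L -> kclean 0 (@mon_ideal K n L).
Proof.
move: (ltnSn (total_deg L)); move: {2}(total_deg L).+1 => N.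
elim: N L => [//|N IHN] L degL copL.
have [[g [k [gL gk g_nvar]]]|varL] := nonvar_generatorP L; last first.
  have [p [_ eLp]] := var_generators_prime copL varL.
  apply: kclean_prime; [exact: mon_ideal_monomial|exact: mon_ideal_proper|].
  by rewrite eLp; apply: var_ideal_prime.
apply: (@kclean_step _ _ _ _ (expo_unit k)).
- exact: mon_ideal_monomial.
- exact: mon_ideal_proper.
- by move=> P /(ass_prime_transversal copL)[p [trp ->]]; apply: transversal_min_prime.
- by apply: (cleaner_var K copL gL gk g_nvar).
- by rewrite supp_expo_unit cards1.
- rewrite (colon_var_mon_ideal K copL gL gk).
  apply: IHN (coprime_family_replace_dec copL gL gk g_nvar).
  exact: leq_trans (total_deg_replace_dec gL gk) (ltnSE degL).
- rewrite (add_var_mon_ideal K L gk); apply: IHN (coprime_family_replace_var copL gL gk).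
  exact: leq_trans (total_deg_replace_var gL gk g_nvar) (ltnSE degL).
Qed.

End CleanCoprimeFamilies.

Section MinimalGenerators.
Variables (K : fieldType) (n : nat) (I : mpoly K n -> Prop) (G : seq (expo n)).
Hypotheses (monI : monomial_ideal I)
  (mingensG : forall a : expo n,
     a \in G <-> I (mono K a) /\ forall b, I (mono K b) -> expo_le b a -> b = a).

Lemma monomial_ideal_up_set : exists A, I = mideal (up_set A).
Proof. by have [A IA] := monI; exists A; rewrite -ideal_gen_monos; apply: pred_ext. Qed.

Lemma monomial_ideal_mono_upward : upward (fun b => I (mono K b)).
Proof.
have [A ->] := monomial_ideal_up_set => a b ab /mideal_mono Aa.
by apply/mideal_mono; apply: upward_up_set Aa.
Qed.

Lemma monomial_idealE : I = mideal (fun b => I (mono K b)).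
Proof.
have [A eIA] := monomial_ideal_up_set.
by rewrite [in LHS]eIA; congr mideal; apply: pred_ext => b; rewrite eIA mideal_mono.
Qed.

Lemma min_gen_below b : I (mono K b) -> exists2 g, g \in G & expo_le g b.
Proof.
move: (ltnSn (expo_deg b)); move: {2}(expo_deg b).+1 => N.
elim: N b => [//|N IHN] b degb Ib.
have [[c [Ic cb c_neq_b]]|minb] := classic (exists c, [/\ I (mono K c), expo_le c b & c <> b]).
  have [g gG gc] := IHN c (leq_trans (expo_deg_lt cb c_neq_b) (ltnSE degb)) Ic.
  by exists g => //; apply: expo_le_trans cb.
exists b; last exact: expo_le_refl.
by apply/mingensG; split=> // c Ic cb; apply: NNPP => c_neq_b; apply: minb; exists c.
Qed.

Lemma mon_ideal_min_gens : I = mon_ideal G.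
Proof.
rewrite monomial_idealE /mon_ideal; congr mideal; apply: pred_ext => b.
split=> [/min_gen_below//|[g /mingensG[Ig _] gb]].
exact: monomial_ideal_mono_upward Ig.
Qed.

Lemma min_gen_nz : proper_id I -> forall g, g \in G -> expo_nz g.
Proof.
move=> properI g /mingensG[Ig _]; apply: NNPP => nz_g; apply: properI.
have eg0 : g = expo0 n.
  apply/ffunP => i; rewrite ffunE; apply/eqP; rewrite -leqn0 leqNgt.
  exact/negP/(not_ex_all_not _ _ nz_g).
by rewrite eg0 mono_expo0 in Ig.
Qed.

Lemma regular_min_gens_coprime : regular_seq [seq mono K a | a <- G] ->
  forall i j, (i < j < size G)%N -> expo_coprime (nth (expo0 n) G i) (nth (expo0 n) G j).
Proof.
move=> [_ regG] i j /andP[ij jG]; set gi := nth _ G i; set gj := nth _ G j.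
move=> k; have [gi0|gik] := posnP (gi k); [by left|right].
apply/eqP; rewrite -leqn0 leqNgt; apply/negP => gjk.
(* g_j x^c lies in (g_0, ..., g_(j-1)) for c = g_i - g_j, hence so does x^c by
   regularity; but x^c properly divides g_i, contradicting its minimality. *)
pose c : expo n := [ffun l => (gi l - gj l)%N].
have gi_take : gi \in take j G.
  by rewrite /gi -(nth_take _ ij); apply: mem_nth; rewrite size_take jG.
have : mon_ideal (take j G) (mono K gj * mono K c).
  rewrite -mono_add; apply/mideal_mono; exists gi => //.
  by apply/expo_leP => l; rewrite !ffunE; lia.
have jG' : (j < size [seq mono K a | a <- G])%N by rewrite size_map.
rewrite mon_ideal_gen_map map_take -(nth_map _ 0) // => /(regG _ jG').
rewrite -map_take -mon_ideal_gen_map => /mideal_mono[h /mem_take hG hc].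
have [_ min_gi] := (mingensG gi).1 (mem_take gi_take).
have ci : expo_le c gi by apply/expo_leP => l; rewrite ffunE leq_subr.
have h_gi := min_gi h ((mingensG h).1 hG).1 (expo_le_trans hc ci).
by move: hc; rewrite h_gi => /expo_leP/(_ k); rewrite ffunE; lia.
Qed.

Lemma min_gens_coprime_family :
  proper_id I -> regular_seq [seq mono K a | a <- G] -> coprime_family G.
Proof.
move=> properI regG; split=> [|g g' gG g'G g_neq_g']; first exact: min_gen_nz.
have coprime_at := regular_min_gens_coprime regG.
rewrite -(nth_index (expo0 n) gG) -(nth_index (expo0 n) g'G).
move: (gG) (g'G); rewrite -!index_mem.
case: (ltngtP (index g G) (index g' G)) => [lt_gg' _ g'_lt|lt_g'g g_lt _|eq_gg' _ _].
- by apply: coprime_at; rewrite lt_gg'.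
- by move=> l; have [|] := coprime_at _ _ (introT andP (conj lt_g'g g_lt)) l; [right|left].
- by case: g_neq_g'; rewrite -(nth_index (expo0 n) gG) eq_gg' nth_index.
Qed.

End MinimalGenerators.

Unset Implicit Arguments.
Set Strict Implicit.

Theorem theorem5p2 (K : fieldType) (n : nat) (I : mpoly K n -> Prop) (G : seq (expo n)) :
  monomial_ideal I ->
  proper_id I ->
  (exists x, I x /\ x <> 0) ->
  (* G lists (without repetition) the minimal monomial generators of I *)
  uniq G ->
  (forall a : expo n,
      a \in G <-> (I (mono K a) /\ forall b : expo n, I (mono K b) -> expo_le b a -> b = a)) ->
  (* they form a regular sequence *)
  regular_seq [seq mono K a | a <- G] ->
  @kclean K n 0 I.
Proof.
move=> monI properI _ _ mingensG regG.
rewrite (mon_ideal_min_gens monI mingensG).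
by apply: coprime_family_kclean; apply: min_gens_coprime_family.
Qed.
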